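(* Let $1\le p\le n$, $\beta>0$, let $f:\mathbb{R}^{n\times p}\to\mathbb{R}$ be smooth, and let $X\in\mathbb{R}^{n\times p}_*$. Let $\mathrm{T}_X\mathrm{St}_{X^\top X}=\{\xi\in\mathbb{R}^{n\times p}\mid \xi^\top X+X^\top\xi=0\}$ be the tangent space at $X$ of $\mathrm{St}_{X^\top X}=\{Y\in\mathbb{R}^{n\times p}\mid Y^\top Y=X^\top X\}$. Let $\mathrm{grad}_\beta f(X)$ be the constrained Riemannian gradient, i.e., the unique $\mathrm{grad}_\beta f(X)\in\mathrm{T}_X\mathrm{St}_{X^\top X}$ such that $\mathrm{D}f(X)[\xi]=g^\beta_X(\xi,\mathrm{grad}_\beta f(X))$ for all $\xi\in\mathrm{T}_X\mathrm{St}_{X^\top X}$. Then $\mathrm{grad}_\beta f(X)=\mathrm{Proj}_{X,\beta}(\nabla_\beta f(X))$ and \[\mathrm{grad}_\beta f(X)=\nabla_{\mathrm E}f(X)X^\top X-\frac{1}{2\beta}X\nabla_{\mathrm E}f(X)^\top X+\Big(\frac{1}{2\beta}-1\Big)X(X^\top X)^{-1}X^\top\nabla_{\mathrm E}f(X)X^\top X.\] In particular, for $\beta=\tfrac12$, \[\mathrm{grad}_{1/2} f(X)=\nabla_{\mathrm E}f(X)X^\top X-X\nabla_{\mathrm E}f(X)^\top X=2\operatorname{skew}\big(\nabla_{\mathrm E}f(X)X^\top\big)X.\]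
   Context: $\mathbb{R}^{n\times p}_*$ denotes the set of full-rank (rank $p$) real $n\times p$ matrices, and $\operatorname{skew}(A)=(A-A^\top)/2$. For $\beta>0$ and $X\in\mathbb{R}^{n\times p}_*$, the $\beta$-metric is the inner product on $\mathbb{R}^{n\times p}$ given by \[g^\beta_X(\xi,\zeta)=\mathrm{trace}\Big(\xi^\top\big(\mathrm{I}_n-(1-\beta)X(X^\top X)^{-1}X^\top\big)\zeta\,(X^\top X)^{-1}\Big),\qquad \xi,\zeta\in\mathbb{R}^{n\times p}.\] $\mathrm{Proj}_{X,\beta}:\mathbb{R}^{n\times p}\to\mathrm{T}_X\mathrm{St}_{X^\top X}$ is the orthogonal projection with respect to $g^\beta_X$ (characterized by $g^\beta_X(\xi,Z-\mathrm{Proj}_{X,\beta}(Z))=0$ for all tangent $\xi$). $\nabla_\beta f(X)$ is the unique element of $\mathbb{R}^{n\times p}$ with $\mathrm{D}f(X)[\xi]=g^\beta_X(\xi,\nabla_\beta f(X))$ for all $\xi\in\mathbb{R}^{n\times p}$, and $\nabla_{\mathrm E}f(X)$ is the Euclidean gradient, with $\mathrm{D}f(X)[\xi]=\mathrm{trace}(\xi^\top\nabla_{\mathrm E}f(X))$. *)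

From HB Require Import structures.
From mathcomp Require Import all_boot all_order all_algebra.
From mathcomp Require Import all_classical all_reals all_analysis.
Set Implicit Arguments. Unset Strict Implicit. Unset Printing Implicit Defensive.
Import Order.TTheory GRing.Theory Num.Theory numFieldNormedType.Exports.
Local Open Scope ring_scope.

Definition tangentSt (R : realType) (n p : nat) (X xi : 'M[R]_(n, p)) : Prop :=
  xi^T *m X + X^T *m xi = 0.

Definition gbeta (R : realType) (n p : nat) (beta : R) (X xi zeta : 'M[R]_(n, p)) : R :=
  \tr (xi^T *m (1%:M - (1 - beta) *: (X *m invmx (X^T *m X) *m X^T))
          *m zeta *m invmx (X^T *m X)).

Definition projSt (R : realType) (n p : nat) (beta : R) (X Z : 'M[R]_(n, p)) : 'M[R]_(n, p) :=
  xget 0 (fun P : 'M[R]_(n, p) => tangentSt X P /\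
            forall xi, tangentSt X xi -> gbeta beta X xi (Z - P) = 0).

Definition skewpart (R : realType) (n : nat) (A : 'M[R]_n) : 'M[R]_n := 2^-1 *: (A - A^T).

(* The metric g^beta_X is positive definite on the tangent space: with
   Q = I - X (X^T X)^-1 X^T, the probe (X X^T + Q) eta (X^T X) of a tangent eta is
   tangent and pairs with eta to beta |X^T eta|^2 + |Q eta|^2.  So a tangent vector is
   determined by its g^beta-pairings with tangent vectors.  This identifies grad with
   the projection of nabla_beta f, and with the explicit formula once the latter is
   shown to be tangent and to pair like nabla_E f; there the two extra terms cancel
   because X^T xi is skew for tangent xi. *)

From HB Require Import structures.
From mathcomp Require Import all_boot all_order all_algebra.
From mathcomp Require Import all_classical all_reals all_analysis.
From mathcomp Require Import ring.
Set Implicit Arguments. Unset Strict Implicit. Unset Printing Implicit Defensive.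
Import Order.TTheory GRing.Theory Num.Theory numFieldNormedType.Exports.
Local Open Scope ring_scope.

Lemma mxtrace_gram (R : comPzRingType) m k (Y : 'M[R]_(m, k)) :
  \tr (Y^T *m Y) = \sum_j \sum_i Y i j ^+ 2.
Proof.
by apply: eq_bigr => j _; rewrite mxE; apply: eq_bigr => i _; rewrite mxE expr2.
Qed.

Lemma mxtrace_gram_ge0 (R : realDomainType) m k (Y : 'M[R]_(m, k)) :
  0 <= \tr (Y^T *m Y).
Proof. by rewrite mxtrace_gram; do 2![apply: sumr_ge0 => ? _]; apply: sqr_ge0. Qed.

Lemma mxtrace_gram_eq0 (R : realDomainType) m k (Y : 'M[R]_(m, k)) :
  \tr (Y^T *m Y) = 0 -> Y = 0.
Proof.
rewrite mxtrace_gram => trY0; apply/matrixP => i j; rewrite mxE.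
have col0 := psumr_eq0P (fun j _ => sumr_ge0 _ (fun i _ => sqr_ge0 (Y i j))) trY0.
have /eqP := psumr_eq0P (fun i _ => sqr_ge0 (Y i j)) (col0 j isT) (i := i) isT.
by rewrite sqrf_eq0 => /eqP.
Qed.

Lemma gram_unitmx (R : realFieldType) m k (X : 'M[R]_(m, k)) :
  \rank X = k -> X^T *m X \in unitmx.
Proof.
move=> rankX; rewrite -row_free_unit -kermx_eq0.
set K := kermx _; have KXX : K *m (X^T *m X) = 0 := mulmx_ker _.
have KX : K *m X^T = 0.
  apply: mxtrace_gram_eq0.
  by rewrite trmx_mul trmxK mxtrace_mulC !mulmxA -(mulmxA K) KXX mul0mx mxtrace0.
by rewrite -(mulmx_free_eq0 K (B := X^T)) ?KX // /row_free mxrank_tr rankX.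
Qed.

Lemma tangentStE (R : realType) n p (X xi : 'M[R]_(n, p)) :
  tangentSt X xi <-> (X^T *m xi)^T = - (X^T *m xi).
Proof.
rewrite /tangentSt trmx_mul trmxK; split=> [/eqP|->]; last exact: addNr.
by rewrite addr_eq0 => /eqP.
Qed.

Lemma tangentStB (R : realType) n p (X a b : 'M[R]_(n, p)) :
  tangentSt X a -> tangentSt X b -> tangentSt X (a - b).
Proof.
rewrite /tangentSt => ta tb.
by rewrite linearB /= mulmxBl mulmxBr addrACA -opprD ta tb subrr.
Qed.

Lemma gbetaBr (R : realType) n p (beta : R) (X xi a b : 'M[R]_(n, p)) :
  gbeta beta X xi (a - b) = gbeta beta X xi a - gbeta beta X xi b.
Proof. by rewrite /gbeta mulmxBr mulmxBl raddfB. Qed.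

Section BetaMetric.

Variables (R : realType) (n p : nat) (beta : R) (X : 'M[R]_(n, p)).
Hypothesis gramX : X^T *m X \in unitmx.

Local Notation M := (X^T *m X).
Local Notation P := (X *m invmx M *m X^T).
Local Notation Q := (1%:M - P).

Lemma trmx_gram : M^T = M.
Proof. by rewrite trmx_mul trmxK. Qed.

Lemma trmx_invgram : (invmx M)^T = invmx M.
Proof. by rewrite trmx_inv trmx_gram. Qed.

Lemma trmx_projX : P^T = P.
Proof. by rewrite !trmx_mul trmxK trmx_invgram mulmxA. Qed.

Lemma trX_projX : X^T *m P = X^T.
Proof. by rewrite !mulmxA mulmxV // mul1mx. Qed.

Lemma projX_X : P *m X = X.
Proof. by rewrite -!mulmxA mulVmx // mulmx1. Qed.

Lemma projX_idem : P *m P = P.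
Proof. by rewrite -(mulmxA (X *m invmx M)) trX_projX. Qed.

Lemma trX_coprojX : X^T *m Q = 0.
Proof. by rewrite mulmxBr mulmx1 trX_projX subrr. Qed.

Lemma trmx_coprojX : Q^T = Q.
Proof. by rewrite raddfB /= trmx1 trmx_projX. Qed.

Lemma coprojX_idem : Q *m Q = Q.
Proof. by rewrite mulmxBl mul1mx mulmxBr mulmx1 projX_idem subrr subr0. Qed.

Definition probeSt (eta : 'M[R]_(n, p)) := (X *m X^T + Q) *m eta *m M.

Lemma tangentSt_probe eta : tangentSt X eta -> tangentSt X (probeSt eta).
Proof.
move=> /tangentStE skewS; apply/tangentStE.
have -> : X^T *m probeSt eta = M *m (X^T *m eta) *m M.
  by rewrite /probeSt !mulmxA mulmxDr trX_coprojX addr0 !mulmxA.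
by rewrite trmx_mul (trmx_mul M) trmx_gram skewS mulNmx mulmxN mulmxA.
Qed.

Lemma gbeta_probe eta : gbeta beta X (probeSt eta) eta =
  beta * \tr ((X^T *m eta)^T *m (X^T *m eta)) + \tr ((Q *m eta)^T *m (Q *m eta)).
Proof.
have metric_probe : (X *m X^T + Q) *m (1%:M - (1 - beta) *: P) = beta *: (X *m X^T) + Q.
  rewrite mulmxBr mulmx1 -scalemxAr.
  have -> : (X *m X^T + Q) *m P = X *m X^T.
    by rewrite mulmxDl -(mulmxA X X^T) trX_projX mulmxBl mul1mx projX_idem subrr addr0.
  by rewrite scalerBl scale1r opprB addrC addrA subrK.
have trA : (X *m X^T + Q)^T = X *m X^T + Q.
  by rewrite raddfD /= trmx_mul trmxK trmx_coprojX.
have e1 : eta^T *m (X *m X^T) *m eta = (X^T *m eta)^T *m (X^T *m eta).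
  by rewrite trmx_mul trmxK !mulmxA.
have e2 : eta^T *m Q *m eta = (Q *m eta)^T *m (Q *m eta).
  by rewrite trmx_mul trmx_coprojX mulmxA -(mulmxA _ Q Q) coprojX_idem.
rewrite /gbeta /probeSt trmx_mul (trmx_mul _ eta) trmx_gram trA.
rewrite -(mulmxA M) -(mulmxA eta^T) metric_probe -[M *m _ *m eta]mulmxA.
rewrite mxtrace_mulC (mulmxA (invmx M) M) mulVmx // mul1mx mulmxDr mulmxDl raddfD /= -e1 -e2.
by rewrite -scalemxAr -scalemxAl mxtraceZ.
Qed.

Hypothesis beta_gt0 : 0 < beta.

Lemma gbeta_tangent_eq0 eta : tangentSt X eta ->
  (forall xi, tangentSt X xi -> gbeta beta X xi eta = 0) -> eta = 0.
Proof.
move=> eta_tan eta_orth.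
have /eqP := eta_orth _ (tangentSt_probe eta_tan).
rewrite gbeta_probe paddr_eq0 ?mulr_ge0 ?mxtrace_gram_ge0 ?ltW //.
rewrite mulf_eq0 gt_eqF //= => /andP[/eqP/mxtrace_gram_eq0 Xeta0 /eqP/mxtrace_gram_eq0 Qeta0].
have -> : eta = X *m invmx M *m (X^T *m eta) + Q *m eta.
  by rewrite mulmxBl mul1mx !mulmxA addrC subrK.
by rewrite Xeta0 Qeta0 mulmx0 addr0.
Qed.

Lemma gbeta_tangent_inj a b : tangentSt X a -> tangentSt X b ->
  (forall xi, tangentSt X xi -> gbeta beta X xi a = gbeta beta X xi b) -> a = b.
Proof.
move=> a_tan b_tan gab; apply/eqP; rewrite -subr_eq0; apply/eqP.
apply: gbeta_tangent_eq0 => [|xi xi_tan]; first exact: tangentStB.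
by rewrite gbetaBr gab // subrr.
Qed.

Lemma projSt_eq Z Y : tangentSt X Y ->
  (forall xi, tangentSt X xi -> gbeta beta X xi (Z - Y) = 0) -> projSt beta X Z = Y.
Proof.
move=> Y_tan Y_orth; apply: xget_unique => // Y' [Y'_tan Y'_orth].
apply: gbeta_tangent_inj => // xi xi_tan.
move: (Y'_orth xi xi_tan) (Y_orth xi xi_tan); rewrite !gbetaBr.
by move=> /eqP; rewrite subr_eq0 => /eqP <- /eqP; rewrite subr_eq0 => /eqP.
Qed.

Definition gradSt (G : 'M[R]_(n, p)) : 'M[R]_(n, p) :=
  G *m M - (2 * beta)^-1 *: (X *m G^T *m X) + ((2 * beta)^-1 - 1) *: (P *m G *m M).

Lemma tangentSt_gradSt G : tangentSt X (gradSt G).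
Proof.
apply/tangentStE.
have -> : X^T *m gradSt G =
    (2 * beta)^-1 *: (X^T *m G *m M - (X^T *m G *m M)^T).
  rewrite /gradSt mulmxDr mulmxBr -!scalemxAr !(mulmxA X^T) mulmxV // mul1mx.
  have -> : (X^T *m G *m M)^T = M *m G^T *m X by rewrite !trmx_mul !trmxK mulmxA.
  by rewrite scalerBl scale1r scalerBr addrC addrA subrK.
by rewrite linearZ linearB /= trmxK -scalerN opprB.
Qed.

Lemma metric_gradSt G : (1%:M - (1 - beta) *: P) *m gradSt G =
  G *m M - 2^-1 *: (X *m G^T *m X + P *m G *m M).
Proof.
rewrite /gradSt mulmxBl mul1mx -scalemxAl mulmxDr mulmxBr -!scalemxAr.
rewrite (mulmxA P (X *m G^T)) (mulmxA P X) projX_X.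
rewrite (mulmxA P (P *m G)) (mulmxA P P) projX_idem (mulmxA P G).
move: (G *m M) (X *m G^T *m X) (P *m G *m M) => A B C.
by apply/matrixP => i j; rewrite !mxE; field; rewrite gt_eqF.
Qed.

Lemma mxtrace_tangent_skew G xi : tangentSt X xi ->
  \tr (xi^T *m (X *m G^T *m X *m invmx M + P *m G)) = 0.
Proof.
move=> /tangentStE skewS.
have xiX : xi^T *m X = - (X^T *m xi) by rewrite -skewS trmx_mul trmxK.
rewrite mulmxDr raddfD /= !mulmxA xiX !mulNmx !raddfN /=.
set S := X^T *m xi in skewS *; set Mi := invmx M; have MiT : Mi^T = Mi := trmx_invgram.
clearbody S Mi.
rewrite -[\tr (S *m _ *m _ *m Mi)]mxtrace_tr !trmx_mul !trmxK MiT skewS.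
by rewrite !mulmxN raddfN /= opprK !mulmxA mxtrace_mulC !mulmxA subrr.
Qed.

Lemma gbeta_gradSt G xi : tangentSt X xi -> gbeta beta X xi (gradSt G) = \tr (xi^T *m G).
Proof.
move=> xi_tan; rewrite /gbeta -(mulmxA xi^T) metric_gradSt -(mulmxA xi^T _ (invmx M)).
rewrite mulmxBl -scalemxAl mulmxDl -!(mulmxA _ M) mulmxV // !mulmx1.
by rewrite mulmxBr -scalemxAr raddfB /= mxtraceZ mxtrace_tangent_skew // mulr0 subr0.
Qed.

End BetaMetric.

Theorem proposition6 (R : realType) (n p : nat) (hp1 : (1 <= p)%N) (hpn : (p <= n)%N)
  (beta : R) (hbeta : 0 < beta) (f : 'M[R]_(n, p) -> R)
  (hf : forall Y : 'M[R]_(n, p), differentiable f Y)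
  (X : 'M[R]_(n, p)) (hX : \rank X = p)
  (gradE : 'M[R]_(n, p))
  (hgradE : forall xi : 'M[R]_(n, p), 'd f X xi = \tr (xi^T *m gradE))
  (nablab : 'M[R]_(n, p))
  (hnablab : forall xi : 'M[R]_(n, p), 'd f X xi = gbeta beta X xi nablab)
  (grad : 'M[R]_(n, p))
  (hgrad_tan : tangentSt X grad)
  (hgrad : forall xi : 'M[R]_(n, p), tangentSt X xi -> 'd f X xi = gbeta beta X xi grad) :
  grad = projSt beta X nablab /\
  grad = gradE *m (X^T *m X) - (2 * beta)^-1 *: (X *m gradE^T *m X)
         + ((2 * beta)^-1 - 1) *: (X *m invmx (X^T *m X) *m X^T *m gradE *m (X^T *m X)) /\
  (beta = 2^-1 ->
     grad = gradE *m (X^T *m X) - X *m gradE^T *m X /\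
     grad = 2 *: skewpart (gradE *m X^T) *m X).
Proof.
have gramX := gram_unitmx hX.
have grad_eq : grad = gradSt beta X gradE.
  apply: (gbeta_tangent_inj gramX hbeta) => //; first exact: tangentSt_gradSt.
  by move=> xi xi_tan; rewrite gbeta_gradSt // -hgradE hgrad.
split.
  symmetry; apply: (projSt_eq gramX hbeta) => // xi xi_tan.
  by rewrite gbetaBr -hnablab -hgrad // subrr.
split; first exact: grad_eq.
move=> beta_half; rewrite grad_eq /gradSt beta_half mulfV ?pnatr_eq0 //.
rewrite invr1 subrr scale0r addr0 scale1r; split=> //.
by rewrite /skewpart scalerA mulfV ?pnatr_eq0 // scale1r trmx_mul trmxK mulmxBl mulmxA.
Qed.
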